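(* Let $n,m\ge1$, $c_1,\dots,c_n>0$, $T>0$, $\epsilon>0$, constant $r_1,\dots,r_m>0$, $\kappa_{ij}\ge0$. Let $\mu_j(q_j)=0$ for $q_j\le c_j$ and $\mu_j(q_j)=T(1-c_j/q_j)$ for $q_j>c_j$, and $\delta_{ij}(\mu)=e^{-(\kappa_{ij}+\mu_j)/\epsilon}/\sum_k e^{-(\kappa_{ik}+\mu_k)/\epsilon}$. Consider the dynamics $$\dot q_j=\sum_{i=1}^m x_{ij}-\frac{q_j}{T},\quad \mu_j=\mu_j(q_j),\quad x_{ij}=r_i\delta_{ij}(\mu),$$ which has a unique equilibrium point $(X^*,q^*,\mu^* )$ (i.e. the unique triple with $\mu^*_j=\mu_j(q^*_j)$, $x^*_{ij}=r_i\delta_{ij}(\mu^* )$, $\sum_ix^*_{ij}=q^*_j/T$). Then any trajectory $(q(t),X(t),\mu(t))$ of these dynamics, with $q(t)$ defined for $t\ge0$ from an arbitrary initial condition, $\mu(t)=\mu(q(t))$, $X(t)=(r_i\delta_{ij}(\mu(t)))$, converges as $t\to\infty$ to $(X^*,q^*,\mu^* )$.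
   Context: The equilibrium coincides with the unique optimum $(X^*,q^* )$ of $\min\sum\kappa_{ij}x_{ij}+\sum_j\beta_j(q_j)+\epsilon\sum x_{ij}\log(x_{ij}/r_i)$ subject to $x_{ij}\ge0$, $\sum_jx_{ij}=r_i$, $\sum_ix_{ij}=q_j/T$, where $\beta_j(q)=\int_0^q[1-c_j/\sigma]^+d\sigma$, together with the optimal Lagrange multiplier $\mu^*$. *)

From HB Require Import structures.
From mathcomp Require Import all_boot all_order all_algebra.
From mathcomp Require Import all_classical all_reals all_analysis.
Set Implicit Arguments. Unset Strict Implicit. Unset Printing Implicit Defensive.
Import Order.TTheory GRing.Theory Num.Theory.
Import numFieldNormedType.Exports.
Local Open Scope ring_scope.

Definition price {R : realType} (T c q : R) : R :=
  if q <= c then 0 else T * (1 - c / q).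

Definition price_vec {R : realType} {n : nat} (T : R) (c q : 'I_n -> R)
  : 'I_n -> R := fun j => price T (c j) (q j).

Definition delta {R : realType} {m n : nat} (eps : R)
  (kappa : 'I_m -> 'I_n -> R) (mu : 'I_n -> R) (i : 'I_m) (j : 'I_n) : R :=
  expR (- (kappa i j + mu j) / eps) /
  \sum_(k < n) expR (- (kappa i k + mu k) / eps).

Definition flow {R : realType} {m n : nat} (eps : R) (r : 'I_m -> R)
  (kappa : 'I_m -> 'I_n -> R) (mu : 'I_n -> R) (i : 'I_m) (j : 'I_n) : R :=
  r i * delta eps kappa mu i j.

Definition qdot {R : realType} {m n : nat} (T eps : R) (c : 'I_n -> R)
  (r : 'I_m -> R) (kappa : 'I_m -> 'I_n -> R) (q : 'I_n -> R) (j : 'I_n) : R :=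
  \sum_(i < m) flow eps r kappa (price_vec T c q) i j - q j / T.

Definition is_equilibrium {R : realType} {m n : nat} (T eps : R)
  (c : 'I_n -> R) (r : 'I_m -> R) (kappa : 'I_m -> 'I_n -> R)
  (qs : 'I_n -> R) : Prop :=
  forall j : 'I_n,
    \sum_(i < m) flow eps r kappa (price_vec T c qs) i j = qs j / T.

From HB Require Import structures.
From mathcomp Require Import all_boot all_order all_algebra.
From mathcomp Require Import all_classical all_reals all_analysis.
From mathcomp Require Import ring lra.
Import Order.TTheory GRing.Theory Num.Theory.
Import numFieldNormedType.Exports.
Local Open Scope classical_set_scope.
Local Open Scope ring_scope.

(* The L1 distance dist(t) = sum_j |q_j(t) - qs_j| to the equilibrium is a
   Lyapunov function.  Since qs is an equilibrium,
   qdot_j = (F(q)_j - F(qs)_j) - (q_j - qs_j)/T, where F(q)_j is the total logit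
   inflow at the prices mu(q).  Prices are nondecreasing in q and the logit
   choice moves mass towards cheaper links, so the sum of F(q)_j - F(qs)_j
   weighted by the signs of q_j - qs_j is nonpositive: the upper right Dini
   derivative of dist is at most -dist/T.  A comparison argument for Dini
   derivatives then shows that dist is nonincreasing and that
   dist(b) (b - a) <= T dist(a), hence dist -> 0.  Prices and flows follow by
   continuity, using qs > 0 (the equilibrium inflow is positive). *)

Section RealFunctions.
Context {R : realType}.

Lemma is_derive_near_le (f : R -> R) (t f' e : R) : is_derive t 1 f f' -> 0 < e ->
  \forall s \near t, `|f s - f t - f' * (s - t)| <= e * `|s - t|.
Proof.
move=> [df <-] e0; have /eqaddoP /(_ e e0) := derivable_nbhs df.
rewrite nbhs0P; apply: filterS => h; rewrite [t + h]addrC addrK !fctE /cst.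
by rewrite -[h%:A]/(h * 1) mulr1 opprD addrA [h *: _]mulrC.
Qed.

Lemma near_right_affine_ge0 (x y t : R) : 0 <= x -> (x = 0 -> 0 <= y) ->
  \forall s \near t^'+, 0 <= x + y * (s - t).
Proof.
move=> x_ge0 y_ge0; have [x0|x_neq0] := eqVneq x 0.
  near=> s; rewrite x0 add0r mulr_ge0 ?y_ge0 // subr_ge0.
  by near: s; exact: nbhs_right_ge.
have x_gt0 : 0 < x by rewrite lt_def x_neq0.
have k_gt0 : 0 < `|y| + 1 by rewrite ltr_wpDl.
near=> s.
have st : 0 <= s - t by rewrite subr_ge0; near: s; exact: nbhs_right_ge.
have : s < t + x / (`|y| + 1) by near: s; apply: nbhs_right_lt; rewrite ltrDl divr_gt0.
rewrite -ltrBlDl ltr_pdivlMr // => small.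
have := ler_wpM2r st (ler_norm (- y)); rewrite normrN; nra.
Unshelve. all: by end_near.
Qed.

Lemma abs_right_dini_le (g : R -> R) (t g' : R) : is_derive t 1 g g' ->
  exists b : bool, (-1) ^+ b * g t = `|g t| /\
    forall e, 0 < e -> \forall s \near t^'+,
      `|g s| <= `|g t| + ((-1) ^+ b * g' + e) * (s - t).
Proof.
move=> dg; pose b := (g t < 0) || (g t == 0) && (g' < 0); exists b.
set sb : R := (-1) ^+ b.
have [sb_g sb_g'] : sb * g t = `|g t| /\ (g t = 0 -> 0 <= sb * g').
  rewrite /sb /b !mulr_sign; have [g_lt0|g_gt0|->] := ltgtP (g t) 0 => /=.
  - by rewrite ltr0_norm //; split=> // /eqP; rewrite lt_eqF.
  - by rewrite gtr0_norm //; split=> // /eqP; rewrite gt_eqF.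
  - by rewrite normr0 oppr0 if_same; split=> // _; case: ltP => [/ltW|]; rewrite ?oppr_ge0.
have sbK : sb * sb = 1 by rewrite -signr_addb addbb.
have lin_ge0 : \forall s \near t^'+, 0 <= sb * g t + sb * g' * (s - t).
  apply: near_right_affine_ge0; first by rewrite sb_g.
  by rewrite sb_g => /normr0_eq0 /sb_g'.
split=> // e e0; near=> s.
have ts : t < s by near: s; exact: nbhs_right_gt.
have approx : `|g s - g t - g' * (s - t)| <= e * `|s - t|.
  by near: s; apply: cvg_within; exact: is_derive_near_le.
have lin_eq : `|g t + g' * (s - t)| = `|g t| + sb * g' * (s - t).
  rewrite -sb_g -[g t + _]mul1r -sbK -mulrA mulrDr mulrA normrM normr_sign mul1r.
  by rewrite ger0_norm //; near: s.
have := ler_normD (g s - g t - g' * (s - t)) (g t + g' * (s - t)).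
have -> : g s - g t - g' * (s - t) + (g t + g' * (s - t)) = g s by ring.
have st : 0 < s - t by rewrite subr_gt0.
rewrite lin_eq (gtr0_norm st) in approx *; lra.
Unshelve. all: by end_near.
Qed.

Lemma right_nonincreasing_le (U : R -> R) (a b : R) : a <= b ->
  (forall t, a < t <= b -> {for t, continuous U}) ->
  (forall t, a <= t < b -> \forall s \near t^'+, U s <= U t) ->
  U b <= U a.
Proof.
move=> ab Ucont Uright.
pose S := [set s | a <= s <= b /\ forall x, a <= x <= s -> U x <= U a].
have Sa : S a.
  split=> [|x /andP[ax xa]]; first by rewrite lexx ab.
  by have -> : x = a by apply/le_anti; rewrite xa ax.
have supS : has_sup S by split; [exists a | exists b => x [/andP[]]].
(* Continuity from the left puts [sup S] in [S]; decrease to the right then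
   forbids [sup S < b]. *)
set s := sup S.
have as_ : a <= s := sup_upper_bound supS Sa.
have sb : s <= b by apply: ge_sup; [exists a | move=> x [/andP[]]].
have below x : a <= x < s -> U x <= U a.
  move=> /andP[ax xs].
  have [y [_ Uy] xy] := @sup_adherent _ S (s - x) (ltac:(by rewrite subr_gt0)) supS.
  by apply: Uy; rewrite ax /=; rewrite -/s in xy; lra.
have Us : U s <= U a.
  have [<-//|sa] := eqVneq a s.
  have as' : a < s by rewrite lt_neqAle sa.
  apply: (closed_cvg _ (@closed_le _ (U a)) _ _ (cvg_at_left_filter (Ucont s _))).
    near=> x; apply: below; apply/andP; split.
      by apply: ltW; near: x; exact: nbhs_left_gt.
    by near: x; exact: nbhs_left_lt.
  by rewrite as' sb.
suff -> : b = s by [].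
apply/eqP; rewrite eq_le sb andbT leNgt; apply/negP => sb'.
have /nbhs_ballP [d /= d_gt0 Ud] := Uright s (ltac:(by rewrite as_ sb')).
pose e := Num.min d (b - s).
have e_gt0 : 0 < e by rewrite lt_min d_gt0 subr_gt0.
have [ed eb] : e <= d /\ e <= b - s by rewrite !ge_min !lexx orbT.
have : S (s + e / 2).
  split=> [|y /andP[ay yx]]; first by apply/andP; split; lra.
  have [ys|sy|->] := ltgtP y s; [by apply: below; rewrite ay ys | | exact: Us].
  apply: le_trans Us; apply: (Ud y) => //; rewrite /ball /= ltr0_norm ?subr_lt0 //; lra.
by move/(sup_upper_bound supS); rewrite -/s; lra.
Unshelve. all: by end_near.
Qed.

Lemma right_dini_le (U : R -> R) (a b k : R) : a <= b ->
  (forall t, a < t <= b -> {for t, continuous U}) ->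
  (forall t, a <= t < b -> forall eta, 0 < eta ->
     \forall s \near t^'+, U s <= U t + (k + eta) * (s - t)) ->
  U b <= U a + k * (b - a).
Proof.
move=> ab Ucont Uright.
have slope_eta eta : 0 < eta -> U b <= U a + (k + eta) * (b - a).
  move=> eta_gt0; pose W s := U s - (k + eta) * (s - a).
  have : W b <= W a.
    apply: right_nonincreasing_le => // t tab.
      apply: cvgB; first exact: Ucont.
      by apply: cvgM; [exact: cvg_cst | apply: cvgB; [exact: cvg_id | exact: cvg_cst]].
    apply: filterS (Uright t tab eta eta_gt0) => s.
    have -> : (k + eta) * (s - t) = (k + eta) * (s - a) - (k + eta) * (t - a) by ring.
    rewrite /W; lra.
  rewrite /W subrr mulr0 subr0; lra.
apply/ler_addgt0Pr => e e_gt0.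
have ba1 : 0 < b - a + 1 by lra.
have := slope_eta (e / (b - a + 1)) (divr_gt0 e_gt0 ba1).
have : e / (b - a + 1) * (b - a) <= e by rewrite mulrAC ler_pdivrMr //; nra.
lra.
Qed.
End RealFunctions.

Section Price.
Context {R : realType}.
Implicit Types T c x y : R.

Lemma price_homo_le T c : 0 <= T -> 0 < c -> {homo price T c : x y / x <= y}.
Proof.
move=> T_ge0 c_gt0 x y xy; rewrite /price.
have [xc|xc] := leP x c; have [yc|yc] := leP y c => //.
- by rewrite mulr_ge0 // subr_ge0 ler_pdivrMr ?mul1r ?ltW // (lt_trans c_gt0).
- lra.
- by rewrite ler_wpM2l // lerD2l lerN2 ler_pM2l // lef_pV2 // posrE; lra.
Qed.

Lemma price_maxE T c x : 0 < x -> price T c x = T * Num.max 0 (1 - c / x).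
Proof.
move=> x_gt0; rewrite /price /Num.max subr_gt0 ltr_pdivrMr // mul1r.
by case: leP => _; rewrite ?mulr0.
Qed.

Lemma price_continuous T c x : 0 < x -> {for x, continuous (price T c)}.
Proof.
move=> x_gt0.
have near_maxE : \forall y \near x, T * Num.max 0 (1 - c / y) = price T c y.
  by near=> y; rewrite price_maxE //; near: y; exact: lt_nbhsr.
apply: cvg_trans (near_eq_cvg near_maxE) _; rewrite price_maxE //.
apply: cvgM; first exact: cvg_cst.
apply: (continuous_max (f := cst 0) (g := fun y => 1 - c / y)); first exact: cvg_cst.
apply: cvgB; first exact: cvg_cst.
apply: cvgM; first exact: cvg_cst.
by apply: cvgV; [rewrite gt_eqF | exact: cvg_id].
Unshelve. all: by end_near.
Qed.
End Price.

Section Logit.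
Context {R : realType}.

Lemma sum_expR_gt0 (n : nat) (g : 'I_n -> R) : (0 < n)%N -> 0 < \sum_(k < n) expR (g k).
Proof.
move=> n_gt0; rewrite (bigD1 (Ordinal n_gt0)) //= ltr_pwDl ?expR_gt0 //.
by apply: sumr_ge0 => k _; exact: expR_ge0.
Qed.

Lemma diff_div_sum_le (A B A' B' : R) : 0 <= A <= A' -> 0 <= B' <= B ->
  0 < A + B -> 0 < A' + B' -> (A - B) / (A + B) <= (A' - B') / (A' + B').
Proof.
by move=> /andP[? ?] /andP[? ?] ? ?; rewrite ler_pdivrMr // mulrAC ler_pdivlMr //; nra.
Qed.

Lemma signed_sumE (n : nat) (b : 'I_n -> bool) (a : 'I_n -> R) :
  \sum_(j < n) (-1) ^+ b j * a j = \sum_(j < n | ~~ b j) a j - \sum_(j < n | b j) a j.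
Proof.
rewrite (bigID b) /= addrC -sumrN; congr (_ + _); apply: eq_bigr => j bj.
  by rewrite mulr_sign (negbTE bj).
by rewrite mulr_sign bj.
Qed.

Variables (m n : nat) (eps : R) (kappa : 'I_m -> 'I_n -> R).
Hypotheses (n_gt0 : (0 < n)%N) (eps_gt0 : 0 < eps).

Lemma delta_signed_sum_le (mu nu : 'I_n -> R) (b : 'I_n -> bool) (i : 'I_m) :
  (forall j, b j -> mu j <= nu j) -> (forall j, ~~ b j -> nu j <= mu j) ->
  \sum_(j < n) (-1) ^+ b j * (delta eps kappa mu i j - delta eps kappa nu i j) <= 0.
Proof.
move=> b_le nb_le; rewrite /delta.
pose w (p : 'I_n -> R) j := expR (- (kappa i j + p j) / eps).
have w_le p p' j : p j <= p' j -> w p' j <= w p j.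
  by move=> pp'; rewrite /w ler_expR ler_pM2r ?invr_gt0 // lerN2 lerD2l.
rewrite -/(w mu _) -/(w nu _).
have -> : forall (X Y : R), \sum_(j < n) (-1) ^+ b j * (w mu j / X - w nu j / Y) =
    (\sum_(j < n) (-1) ^+ b j * w mu j) / X - (\sum_(j < n) (-1) ^+ b j * w nu j) / Y.
  by move=> X Y; rewrite !mulr_suml -sumrB; apply: eq_bigr => j _; ring.
have split_sum p : \sum_(j < n) w p j =
    \sum_(j < n | ~~ b j) w p j + \sum_(j < n | b j) w p j.
  by rewrite (bigID b) /= addrC.
have sum_ge0 p (P : pred 'I_n) : 0 <= \sum_(j < n | P j) w p j.
  by apply: sumr_ge0 => j _; exact: expR_ge0.
rewrite !signed_sumE subr_le0 !split_sum; apply: diff_div_sum_le.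
- by rewrite sum_ge0 /=; apply: ler_sum => j /nb_le; exact: w_le.
- by rewrite sum_ge0 /=; apply: ler_sum => j /b_le; exact: w_le.
- by rewrite -split_sum; exact: sum_expR_gt0.
- by rewrite -split_sum; exact: sum_expR_gt0.
Qed.

Lemma inflow_signed_sum_le (r : 'I_m -> R) (mu nu : 'I_n -> R) (b : 'I_n -> bool) :
  (forall i, 0 <= r i) ->
  (forall j, b j -> mu j <= nu j) -> (forall j, ~~ b j -> nu j <= mu j) ->
  \sum_(j < n) (-1) ^+ b j *
    (\sum_(i < m) flow eps r kappa mu i j - \sum_(i < m) flow eps r kappa nu i j) <= 0.
Proof.
move=> r_ge0 b_le nb_le.
under eq_bigr => j _ do rewrite -sumrB mulr_sumr.
rewrite exchange_big /=; apply: sumr_le0 => i _.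
under eq_bigr => j _ do rewrite /flow -mulrBr mulrCA.
by rewrite -mulr_sumr mulr_ge0_le0 // delta_signed_sum_le.
Qed.

Lemma flow_gt0 (r : 'I_m -> R) (mu : 'I_n -> R) i j :
  0 < r i -> 0 < flow eps r kappa mu i j.
Proof.
by move=> r_gt0; rewrite mulr_gt0 // divr_gt0 ?expR_gt0 ?sum_expR_gt0.
Qed.

Lemma cvg_flow {T : Type} {F : set_system T} {FF : Filter F} (r : 'I_m -> R)
    (mu : T -> 'I_n -> R) (nu : 'I_n -> R) i j :
  (forall k, mu x k @[x --> F] --> nu k) ->
  flow eps r kappa (mu x) i j @[x --> F] --> flow eps r kappa nu i j.
Proof.
move=> mu_nu.
have cvg_w k : expR (- (kappa i k + mu x k) / eps) @[x --> F] -->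
    expR (- (kappa i k + nu k) / eps).
  apply: continuous_cvg; first exact: continuous_expR.
  apply: cvgM; last exact: cvg_cst.
  by apply: cvgN; apply: cvgD; [exact: cvg_cst | exact: mu_nu].
apply: cvgM; first exact: cvg_cst.
apply: cvgM; first exact: cvg_w.
apply: cvgV; first by rewrite gt_eqF ?sum_expR_gt0.
apply: (cvg_big (op := +%R) (x0 := 0) (P := xpredT)) => [|k _]; first exact: add_continuous.
exact: cvg_w.
Qed.
End Logit.

Lemma equilibrium_gt0 {R : realType} {n m : nat} {c : 'I_n -> R} {T eps : R}
    {r : 'I_m -> R} {kappa : 'I_m -> 'I_n -> R} {qs : 'I_n -> R} :
  (0 < n)%N -> (0 < m)%N -> 0 < T -> (forall i, 0 < r i) ->
  is_equilibrium T eps c r kappa qs -> forall j, 0 < qs j.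
Proof.
move=> n_gt0 m_gt0 T_gt0 r_gt0 qs_eq j; have : 0 < qs j / T.
  rewrite -qs_eq (bigD1 (Ordinal m_gt0)) //= ltr_pwDl ?flow_gt0 //.
  by apply: sumr_ge0 => i _; exact/ltW/flow_gt0.
by rewrite pmulr_lgt0 // invr_gt0.
Qed.

Section QueueDynamics.
Variables (R : realType) (n m : nat) (c : 'I_n -> R) (T eps : R).
Variables (r : 'I_m -> R) (kappa : 'I_m -> 'I_n -> R).
Hypotheses (n_gt0 : (0 < n)%N) (c_gt0 : forall j, 0 < c j).
Hypotheses (T_gt0 : 0 < T) (eps_gt0 : 0 < eps) (r_gt0 : forall i, 0 < r i).
Variables (qs : 'I_n -> R) (q : R -> 'I_n -> R).
Hypothesis qs_eq : is_equilibrium T eps c r kappa qs.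
Hypothesis q_ode : forall t : R, 0 < t -> forall j,
  is_derive t 1 (fun s => q s j) (qdot T eps c r kappa (q t) j).

Let inflow p j := \sum_(i < m) flow eps r kappa (price_vec T c p) i j.
Let dist t := \sum_(j < n) `|q t j - qs j|.

Lemma qdot_equilibriumE p j :
  qdot T eps c r kappa p j = inflow p j - inflow qs j - (p j - qs j) / T.
Proof. by rewrite /qdot -/(inflow p j) [inflow qs j]qs_eq; ring. Qed.

Lemma signed_qdot_sum_le t (b : 'I_n -> bool) :
  (forall j, (-1) ^+ b j * (q t j - qs j) = `|q t j - qs j|) ->
  \sum_(j < n) (-1) ^+ b j * qdot T eps c r kappa (q t) j <= - dist t / T.
Proof.
move=> b_sign.
under eq_bigr => j _ do rewrite qdot_equilibriumE mulrBr mulrA b_sign.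
rewrite sumrB -mulr_suml -/(dist t) mulNr -[X in _ <= X]add0r lerD2r.
apply: inflow_signed_sum_le => // [i|j bj|j bj]; first exact: ltW.
- apply: price_homo_le; [exact: ltW | by [] |].
  by have := normr_ge0 (q t j - qs j); rewrite -b_sign bj mulN1r oppr_ge0 subr_le0.
- apply: price_homo_le; [exact: ltW | by [] |].
  by have := normr_ge0 (q t j - qs j); rewrite -b_sign (negbTE bj) mul1r subr_ge0.
Qed.

Lemma dist_right_dini t : 0 < t -> forall eta, 0 < eta ->
  \forall s \near t^'+, dist s <= dist t + (- dist t / T + eta) * (s - t).
Proof.
move=> t_gt0 eta eta_gt0.
have dist_dini j : exists bj : bool,
    (-1) ^+ bj * (q t j - qs j) = `|q t j - qs j| /\
    forall e, 0 < e -> \forall s \near t^'+, `|q s j - qs j| <=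
      `|q t j - qs j| + ((-1) ^+ bj * qdot T eps c r kappa (q t) j + e) * (s - t).
  have := abs_right_dini_le _ _ _ (is_deriveB (q_ode _ t_gt0 j) (is_derive_cst (qs j) t 1)).
  by rewrite subr0.
have [b /all_and2 [b_sign b_dini]] := fin_all_exists dist_dini.
have eta_n : 0 < eta / n%:R by rewrite divr_gt0 // ltr0n.
near=> s.
have dini : forall j, `|q s j - qs j| <= `|q t j - qs j| +
    ((-1) ^+ b j * qdot T eps c r kappa (q t) j + eta / n%:R) * (s - t).
  by near: s; apply: filter_forall => j; exact: b_dini.
rewrite /dist; apply: le_trans (ler_sum _ (fun j _ => dini j)) _.
rewrite big_split /= -mulr_suml big_split /= sumr_const card_ord.
rewrite -[_ *+ n]mulr_natr divfK ?pnatr_eq0 -?lt0n // lerD2l ler_wpM2r ?lerD2r //.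
- by rewrite subr_ge0; near: s; exact: nbhs_right_ge.
- exact: signed_qdot_sum_le.
Unshelve. all: by end_near.
Qed.

Lemma dist_continuous t : 0 < t -> {for t, continuous dist}.
Proof.
move=> t_gt0; apply: (cvg_big (op := +%R) (x0 := 0) (P := xpredT)) => [|j _].
  exact: add_continuous.
apply: cvg_norm; apply: cvgB; last exact: cvg_cst.
apply: differentiable_continuous; apply/derivable1_diffP.
by have [] := q_ode _ t_gt0 j.
Qed.

Lemma dist_nonincreasing a b : 0 < a -> a <= b -> dist b <= dist a.
Proof.
move=> a_gt0 ab; have := right_dini_le dist a b 0 ab; rewrite mul0r addr0; apply.
  by move=> t /andP[a_lt_t _]; apply: dist_continuous; exact: lt_trans a_lt_t.
move=> t /andP[a_le_t _] eta eta_gt0.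
have t_gt0 : 0 < t by exact: lt_le_trans a_le_t.
near=> s.
have : dist s <= dist t + (- dist t / T + eta) * (s - t).
  by near: s; exact: dist_right_dini.
have : 0 <= dist t / T * (s - t).
  rewrite mulr_ge0 ?divr_ge0 ?sumr_ge0 ?ltW // ?subr_gt0.
  by near: s; exact: nbhs_right_gt.
rewrite mulNr; lra.
Unshelve. all: by end_near.
Qed.

Lemma dist_decay a b : 0 < a -> a <= b -> dist b * (b - a) <= T * dist a.
Proof.
move=> a_gt0 ab.
have : dist b <= dist a + (- dist b / T) * (b - a).
  (* On [a, b] the slope -dist t / T is at most -dist b / T, as dist is nonincreasing. *)
  apply: right_dini_le => // [t /andP[a_lt_t _] | t /andP[a_le_t t_lt_b] eta eta_gt0].
    by apply: dist_continuous; exact: lt_trans a_lt_t.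
  have t_gt0 : 0 < t by exact: lt_le_trans a_le_t.
  near=> s.
  have : dist s <= dist t + (- dist t / T + eta) * (s - t) by near: s; exact: dist_right_dini.
  have : dist b / T * (s - t) <= dist t / T * (s - t).
    rewrite ler_wpM2r ?ler_pM2r ?invr_gt0 ?dist_nonincreasing ?ltW // subr_gt0.
    by near: s; exact: nbhs_right_gt.
  rewrite !mulNr; lra.
rewrite mulNr => decay.
have Vb_ge0 : 0 <= T * dist b by rewrite mulr_ge0 ?sumr_ge0 ?ltW.
have -> : dist b * (b - a) = T * (dist b / T * (b - a)) by field; rewrite gt_eqF.
have : dist b / T * (b - a) <= dist a - dist b by lra.
move=> /(ler_wpM2l (ltW T_gt0)); rewrite mulrBr; lra.
Unshelve. all: by end_near.
Qed.

Lemma cvg_queue j : q t j @[t --> +oo] --> qs j.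
Proof.
apply/cvgrPdist_le => e e_gt0; near=> t.
have t_gt1 : 1 < t by near: t; apply: nbhs_pinfty_gt; exact: num_real.
have t_big : T * dist 1 / e + 1 <= t by near: t; apply: nbhs_pinfty_ge; exact: num_real.
have : `|qs j - q t j| <= dist t.
  by rewrite distrC /dist (bigD1 j) //= lerDl; apply: sumr_ge0.
move=> /le_trans; apply.
have : T * dist 1 <= e * (t - 1).
  have -> : T * dist 1 = e * (T * dist 1 / e) by field; rewrite gt_eqF.
  rewrite ler_pM2l //; lra.
have := dist_decay _ _ ltr01 (ltW t_gt1).
move=> /le_trans /[apply]; rewrite ler_pM2r // subr_gt0.
Unshelve. all: by end_near.
Qed.
End QueueDynamics.

Theorem theorem2 (R : realType) (n m : nat) (hn : (0 < n)%N) (hm : (0 < m)%N)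
  (c : 'I_n -> R) (T eps : R) (r : 'I_m -> R) (kappa : 'I_m -> 'I_n -> R)
  (hc : forall j, 0 < c j) (hT : 0 < T) (heps : 0 < eps)
  (hr : forall i, 0 < r i) (hk : forall i j, 0 <= kappa i j)
  (qs : 'I_n -> R) (heq : is_equilibrium T eps c r kappa qs)
  (q : R -> 'I_n -> R)
  (hode : forall t : R, 0 < t -> forall j : 'I_n,
      is_derive t 1 (fun s => q s j) (qdot T eps c r kappa (q t) j)) :
  (forall j : 'I_n, q t j @[t --> +oo] --> qs j) /\
  (forall j : 'I_n, price_vec T c (q t) j @[t --> +oo] --> price_vec T c qs j) /\
  (forall (i : 'I_m) (j : 'I_n),
      flow eps r kappa (price_vec T c (q t)) i j @[t --> +oo]
        --> flow eps r kappa (price_vec T c qs) i j).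
Proof.
have q_qs j : q t j @[t --> +oo] --> qs j by apply: cvg_queue => //.
have p_ps j : price_vec T c (q t) j @[t --> +oo] --> price_vec T c qs j.
  apply: (continuous_cvg _ (price_continuous _ _ _ _)) (q_qs j).
  exact: equilibrium_gt0 hn hm hT hr heq j.
by split=> //; split=> // i j; apply: cvg_flow.
Qed.
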